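(* Let $0<a<1$ and let $\tau_1,\tau_2:[0,a]\to[0,1]$ be continuously differentiable, strictly increasing maps with $\tau_i(0)=0$, $\tau_i(a)=1$, $\tau_1(x)\le x/a$ and $\tau_2(x)\ge x/a$, such that $\tau_{21}=\tau_2^{-1}\circ\tau_1:[0,a]\to[0,a]$ is continuously differentiable and satisfies $\tau_{21}(x)<x$ for $x\in(0,a)$. Let $0<\widehat a<a$ and $\sigma<1$ be such that $\tau_{21}'(x)\le\sigma$ for $x\in[0,\widehat a]$. Then the unique bounded solution on $[0,\widehat a]$ of the functional equation $$p(x)=p(\tau_{21}(x))\,\tau_{21}'(x)-\left[\tau_{21}'(x)-a\,\tau_1'(x)\right]$$ is given by the convergent series $$p(x)=\sum_{n=0}^\infty B(\tau_{21}^n(x))\,(\tau_{21}^n)'(x),\qquad x\in[0,\widehat a],$$ where $B(x)=a\,\tau_1'(x)-\tau_{21}'(x)$ and $\tau_{21}^n$ denotes the $n$-th iterate. *)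

From Stdlib Require Import Reals.
From Coquelicot Require Import Coquelicot.
Open Scope R_scope.

Definition deriv_within (lo hi : R) (f : R -> R) (x f' : R) : Prop :=
  filterlim (fun y => (f y - f x) / (y - x))
    (within (fun y => lo <= y <= hi /\ y <> x) (locally x))
    (locally f').

Definition continuous_on_interval (lo hi : R) (g : R -> R) : Prop :=
  forall x, lo <= x <= hi ->
    filterlim g (within (fun y => lo <= y <= hi) (locally x)) (locally (g x)).

Definition C1_on (lo hi : R) (f f' : R -> R) : Prop :=
  (forall x, lo <= x <= hi -> deriv_within lo hi f x (f' x)) /\
  continuous_on_interval lo hi f'.

Definition strictly_increasing_on (lo hi : R) (f : R -> R) : Prop :=
  forall x y, lo <= x <= hi -> lo <= y <= hi -> x < y -> f x < f y.

Definition bounded_solution (a ah : R) (t21 d21 d1 p : R -> R) : Prop :=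
  (exists M, forall x, 0 <= x <= ah -> Rabs (p x) <= M) /\
  (forall x, 0 <= x <= ah ->
     p x = p (t21 x) * d21 x - (d21 x - a * d1 x)).

From Stdlib Require Import Reals Lra.
From Coquelicot Require Import Coquelicot.

(* Writing the functional equation as p = (p o t) t' + B with t = tau21 and
   B = a tau1' - tau21', n-fold substitution gives
   p x = sum_(k<n) B(t^k x) (t^k)'(x) + p(t^n x) (t^n)'(x),
   where (t^n)' is a product of n values of t' along the orbit of x.  On
   [0, ah] the map t stays in [0, ah] (since t 0 = 0 and t x < x) and
   0 <= t' <= sigma < 1, so (t^n)' = O(sigma^n): the remainder of any
   bounded solution vanishes, and conversely the series converges
   geometrically and solves the equation. *)

Open Scope R_scope.

(* Caratheodory: [f] has derivative [l] at [x] iff [slope f x l] is continuous at [x]. *)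
Definition slope (f : R -> R) (x l z : R) : R :=
  if Req_dec_T z x then l else (f z - f x) / (z - x).

Lemma slope_spec f x l z : f z = f x + slope f x l z * (z - x).
Proof.
  unfold slope; destruct (Req_dec_T z x) as [->|Hzx]; [ring|field; lra].
Qed.

Lemma slope_neq f x l z : z <> x -> slope f x l z = (f z - f x) / (z - x).
Proof. intros Hzx; unfold slope; destruct (Req_dec_T z x); tauto. Qed.

Lemma filterlim_within_locally (D : R -> Prop) x :
  filterlim (fun z => z) (within D (locally x)) (locally x).
Proof. intros P HP; exact (filter_imp P _ (fun y Py _ => Py) HP). Qed.

Section DerivativeWithinInterval.

Variables lo hi : R.

Notation I := (fun y => lo <= y <= hi).

Lemma deriv_within_slope f x l :
  deriv_within lo hi f x l <->
  filterlim (slope f x l) (within I (locally x)) (locally l).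
Proof.
  split; intros H P HP; specialize (H P HP); revert H;
    apply (filter_imp (F := locally x)); intros y Hy Iy.
  - unfold slope; destruct (Req_dec_T y x) as [->|Hyx].
    + exact (locally_singleton _ _ HP).
    + exact (Hy (conj Iy Hyx)).
  - rewrite <- slope_neq with (l := l) by apply Iy; exact (Hy (proj1 Iy)).
Qed.

Lemma deriv_within_continuous f x l :
  deriv_within lo hi f x l -> filterlim f (within I (locally x)) (locally (f x)).
Proof.
  intros Hs%deriv_within_slope.
  assert (Hlin : filterlim (fun z => z - x) (within I (locally x)) (locally (x - x))).
  { apply (filterlim_comp _ _ _ (fun z => z) (fun z => z - x) _ (locally x));
      [exact (filterlim_within_locally I x)|].
    apply (continuity_pt_filterlim (fun z => z - x)), continuity_pt_minus;
      [apply continuity_pt_id | apply continuity_pt_const; intros ? ?; reflexivity]. }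
  assert (Hprod := filterlim_comp_2 _ _ Rmult Hs Hlin (@filterlim_mult R_AbsRing l (x - x))).
  assert (Hsum : filterlim (fun z => f x + slope f x l z * (z - x))
                   (within I (locally x)) (locally (f x + l * (x - x)))).
  { apply (filterlim_comp _ _ _ _ (Rplus (f x)) _ _ _ Hprod).
    apply (continuity_pt_filterlim (Rplus (f x))), continuity_pt_plus;
      [apply continuity_pt_const; intros ? ?; reflexivity | apply continuity_pt_id]. }
  replace (f x + l * (x - x)) with (f x) in Hsum by ring.
  exact (filterlim_ext _ _ (fun z => eq_sym (slope_spec f x l z)) Hsum).
Qed.

Lemma deriv_within_id x : deriv_within lo hi (fun y => y) x 1.
Proof.
  apply deriv_within_slope, (filterlim_ext (fun _ => 1)); [|apply filterlim_const].
  intro z; unfold slope; destruct (Req_dec_T z x); [reflexivity | field; lra].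
Qed.

Lemma slope_comp f g x lf lg z :
  slope (fun y => f (g y)) x (lf * lg) z = slope f (g x) lf (g z) * slope g x lg z.
Proof.
  unfold slope; destruct (Req_dec_T z x) as [->|Hzx].
  - destruct (Req_dec_T (g x) (g x)); [reflexivity | congruence].
  - destruct (Req_dec_T (g z) (g x)) as [->|Hg]; [unfold Rdiv; ring | field; lra].
Qed.

Lemma deriv_within_comp f g x lf lg :
  (forall y, lo <= y <= hi -> lo <= g y <= hi) ->
  deriv_within lo hi f (g x) lf -> deriv_within lo hi g x lg ->
  deriv_within lo hi (fun y => f (g y)) x (lf * lg).
Proof.
  intros Hmaps Hf Hg.
  assert (Hgc : filterlim g (within I (locally x)) (within I (locally (g x)))).
  { intros P HP; specialize (deriv_within_continuous g x lg Hg _ HP).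
    apply (filter_imp (F := locally x)); intros y Hy Iy; exact (Hy Iy (Hmaps y Iy)). }
  apply deriv_within_slope in Hf, Hg; apply deriv_within_slope.
  apply (filterlim_ext (fun z => slope f (g x) lf (g z) * slope g x lg z)).
  { intro z; symmetry; apply slope_comp. }
  exact (filterlim_comp_2 _ _ Rmult (filterlim_comp _ _ _ _ _ _ _ _ Hgc Hf) Hg
           (@filterlim_mult R_AbsRing lf lg)).
Qed.

Hypothesis lo_lt_hi : lo < hi.

Lemma within_punctured_interval_proper x :
  lo <= x <= hi -> ProperFilter (within (fun y => I y /\ y <> x) (locally x)).
Proof.
  intros Ix; split; [|apply within_filter, locally_filter].
  intros P [eps HP].
  set (m := Rmin eps (hi - lo) / 2).
  assert (Hm : 0 < m /\ m < eps /\ m <= (hi - lo) / 2).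
  { generalize (Rmin_pos eps (hi - lo) (cond_pos eps) ltac:(lra))
      (Rmin_l eps (hi - lo)) (Rmin_r eps (hi - lo)); unfold m; lra. }
  assert (Hy : exists y, I y /\ y <> x /\ Rabs (y - x) < eps).
  { destruct (Rle_dec x ((lo + hi) / 2)).
    - exists (x + m); rewrite Rabs_right; repeat split; lra.
    - exists (x - m); rewrite Rabs_left; repeat split; lra. }
  destruct Hy as [y [Iy [Hyx Hball]]]; exists y; exact (HP y Hball (conj Iy Hyx)).
Qed.

Lemma deriv_within_unique f x l1 l2 : lo <= x <= hi ->
  deriv_within lo hi f x l1 -> deriv_within lo hi f x l2 -> l1 = l2.
Proof.
  intros Ix; apply (@filterlim_locally_unique _ R_AbsRing R_NormedModule).
  exact (Proper_StrongProper _ (within_punctured_interval_proper x Ix)).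
Qed.

Lemma deriv_within_increasing_nonneg f x l : lo <= x <= hi ->
  strictly_increasing_on lo hi f -> deriv_within lo hi f x l -> 0 <= l.
Proof.
  intros Ix Hinc Hd; destruct (Rle_or_lt 0 l) as [|Hl]; [assumption|exfalso].
  assert (Hneg : locally l (fun r => r < 0)).
  { exists (mkposreal (- l) ltac:(lra)); intros r Hr.
    change (Rabs (r - l) < - l) in Hr; apply Rabs_def2 in Hr; lra. }
  assert (Hpos : within (fun y => I y /\ y <> x) (locally x)
                   (fun y => 0 < (f y - f x) / (y - x))).
  { apply (filter_forall (F := locally x)); intros y [Iy Hyx].
    destruct (Rlt_or_le x y) as [Hxy|Hyx'].
    - apply Rdiv_lt_0_compat; [generalize (Hinc x y Ix Iy Hxy)|]; lra.
    - replace ((f y - f x) / (y - x)) with ((f x - f y) / (x - y)) by (field; lra).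
      apply Rdiv_lt_0_compat; [generalize (Hinc y x Iy Ix ltac:(lra))|]; lra. }
  destruct (@filter_ex _ _ (within_punctured_interval_proper x Ix) _
              (filter_and _ _ Hpos (Hd _ Hneg))) as [y [Hy1 Hy2]]; lra.
Qed.

End DerivativeWithinInterval.

Definition clamp (lo hi y : R) : R := Rmax lo (Rmin y hi).

Lemma clamp_in_interval lo hi y : lo <= hi -> lo <= clamp lo hi y <= hi.
Proof. intros; unfold clamp, Rmax, Rmin; destruct (Rle_dec y hi), (Rle_dec lo _); lra. Qed.

Lemma clamp_id lo hi y : lo <= y <= hi -> clamp lo hi y = y.
Proof. intros; unfold clamp, Rmax, Rmin; destruct (Rle_dec y hi), (Rle_dec lo _); lra. Qed.

Lemma clamp_1_lipschitz lo hi y z :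
  lo <= hi -> Rabs (clamp lo hi y - clamp lo hi z) <= Rabs (y - z).
Proof.
  intros; unfold clamp, Rmax, Rmin, Rabs.
  destruct (Rle_dec y hi), (Rle_dec z hi);
  repeat match goal with
         | |- context [Rle_dec ?u ?v] => destruct (Rle_dec u v)
         | |- context [Rcase_abs ?u] => destruct (Rcase_abs u)
         end; lra.
Qed.

(* [g o clamp] is continuous on R at the points of [lo, hi], so Stdlib's extreme value theorem applies. *)
Lemma continuous_on_interval_bounded lo hi g : lo <= hi ->
  continuous_on_interval lo hi g ->
  exists M, forall x, lo <= x <= hi -> Rabs (g x) <= M.
Proof.
  intros Hlh Hg.
  assert (Hcont : forall c, lo <= c <= hi ->
                    continuity_pt (fun y => Rabs (g (clamp lo hi y))) c).
  { intros c Ic; apply (continuity_pt_comp (fun y => g (clamp lo hi y)) Rabs);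
      [|apply Rcontinuity_abs].
    apply continuity_pt_filterlim.
    apply (filterlim_comp _ _ _ (clamp lo hi) g _ (within (fun y => lo <= y <= hi)
             (locally c))); [|rewrite clamp_id by exact Ic; exact (Hg c Ic)].
    intros P [eps HP]; exists eps; intros y Hy.
    rewrite <- (clamp_id lo hi c Ic) in HP.
    apply HP; [|exact (clamp_in_interval lo hi y Hlh)].
    exact (Rle_lt_trans _ _ _ (clamp_1_lipschitz lo hi y c Hlh) Hy). }
  destruct (continuity_ab_maj _ lo hi Hlh Hcont) as [xm [Hxm _]].
  exists (Rabs (g (clamp lo hi xm))); intros x Ix.
  rewrite <- (clamp_id lo hi x Ix); exact (Hxm x Ix).
Qed.

Lemma strictly_increasing_inj lo hi f x y :
  strictly_increasing_on lo hi f -> lo <= x <= hi -> lo <= y <= hi ->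
  f x = f y -> x = y.
Proof.
  intros Hf Ix Iy Hxy; destruct (Rtotal_order x y) as [Hlt|[Heq|Hgt]]; [|exact Heq|].
  - generalize (Hf x y Ix Iy Hlt); lra.
  - generalize (Hf y x Iy Ix Hgt); lra.
Qed.

Lemma strictly_increasing_factor lo hi f g t :
  strictly_increasing_on lo hi f -> strictly_increasing_on lo hi g ->
  (forall x, lo <= x <= hi -> lo <= t x <= hi) ->
  (forall x, lo <= x <= hi -> g (t x) = f x) ->
  strictly_increasing_on lo hi t.
Proof.
  intros Hf Hg Ht Hgt x y Ix Iy Hxy.
  destruct (Rlt_or_le (t x) (t y)) as [|Hle]; [assumption|exfalso].
  generalize (Hf x y Ix Iy Hxy); rewrite <- (Hgt x Ix), <- (Hgt y Iy).
  destruct Hle as [Hlt|Heq]; [generalize (Hg _ _ (Ht y Iy) (Ht x Ix) Hlt) | rewrite Heq]; lra.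
Qed.

Lemma iter_maps lo hi t n x : (forall y, lo <= y <= hi -> lo <= t y <= hi) ->
  lo <= x <= hi -> lo <= Nat.iter n t x <= hi.
Proof. intros Ht Hx; induction n; simpl; auto. Qed.

Fixpoint iter_deriv (t d : R -> R) (n : nat) (x : R) : R :=
  match n with
  | O => 1
  | S m => d (Nat.iter m t x) * iter_deriv t d m x
  end.

Lemma iter_deriv_succ_r t d n x : iter_deriv t d (S n) x = iter_deriv t d n (t x) * d x.
Proof.
  induction n as [|n IH]; [simpl; ring|].
  change (iter_deriv t d (S (S n)) x) with (d (Nat.iter (S n) t x) * iter_deriv t d (S n) x).
  rewrite IH, Nat.iter_succ_r; simpl; ring.
Qed.

Lemma deriv_within_iter lo hi t d n x :
  (forall y, lo <= y <= hi -> lo <= t y <= hi) ->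
  (forall y, lo <= y <= hi -> deriv_within lo hi t y (d y)) ->
  lo <= x <= hi -> deriv_within lo hi (Nat.iter n t) x (iter_deriv t d n x).
Proof.
  intros Ht Hd Ix; induction n as [|n IH]; [apply deriv_within_id|].
  apply (deriv_within_comp lo hi t (Nat.iter n t)); [|apply Hd, iter_maps|]; auto.
  intros y Iy; apply iter_maps; auto.
Qed.

Definition orbit_series (t d b : R -> R) (x : R) : R :=
  Series (fun n => b (Nat.iter n t x) * iter_deriv t d n x).

Section ContractiveFunctionalEquation.

Variables (lo hi sigma : R) (t d b : R -> R).

Notation I := (fun y => lo <= y <= hi).

Hypothesis t_maps : forall y, I y -> I (t y).
Hypothesis d_bound : forall y, I y -> Rabs (d y) <= sigma.
Hypothesis sigma_range : 0 <= sigma < 1.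

Lemma iter_deriv_bound n x : I x -> Rabs (iter_deriv t d n x) <= sigma ^ n.
Proof.
  intros Ix; induction n as [|n IH]; simpl; [rewrite Rabs_R1; lra|].
  rewrite Rabs_mult; apply Rmult_le_compat; try apply Rabs_pos; auto.
  apply d_bound, iter_maps; auto.
Qed.

Lemma bounded_solution_is_series p :
  (exists M, forall x, I x -> Rabs (p x) <= M) ->
  (forall x, I x -> p x = p (t x) * d x + b x) ->
  forall x, I x -> is_series (fun n => b (Nat.iter n t x) * iter_deriv t d n x) (p x).
Proof.
  intros [M HM] Hp x Ix.
  set (rem := fun n => p (Nat.iter (S n) t x) * iter_deriv t d (S n) x).
  assert (Hsum : forall n, sum_n (fun n => b (Nat.iter n t x) * iter_deriv t d n x) n
                           = p x - rem n).
  { induction n as [|n IH].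
    - rewrite sum_O; unfold rem; simpl; rewrite (Hp x Ix); ring.
    - rewrite sum_Sn, IH; unfold plus, rem; simpl.
      rewrite (Hp (t (Nat.iter n t x))) by exact (t_maps _ (iter_maps _ _ _ n x t_maps Ix)).
      ring. }
  assert (Hrem : is_lim_seq rem 0).
  { apply is_lim_seq_abs_0, (is_lim_seq_le_le (fun _ => 0) _ (fun n => M * sigma * sigma ^ n)).
    - intro n; split; [apply Rabs_pos|]; unfold rem; rewrite Rabs_mult.
      replace (M * sigma * sigma ^ n) with (M * sigma ^ S n) by (simpl; ring).
      apply Rmult_le_compat; try apply Rabs_pos;
        [apply HM, iter_maps | apply iter_deriv_bound]; auto.
    - apply is_lim_seq_const.
    - replace (Finite 0) with (Rbar_mult (M * sigma) 0) by (simpl; f_equal; ring).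
      apply is_lim_seq_scal_l, is_lim_seq_geom.
      rewrite Rabs_right; lra. }
  assert (Hlim := is_lim_seq_minus' _ _ _ _ (is_lim_seq_const (p x)) Hrem).
  rewrite Rminus_0_r in Hlim.
  exact (is_lim_seq_ext _ _ _ (fun n => eq_sym (Hsum n)) Hlim).
Qed.

Variable K : R.
Hypothesis b_bound : forall y, I y -> Rabs (b y) <= K.

Lemma orbit_series_term_bound x n : I x ->
  Rabs (b (Nat.iter n t x) * iter_deriv t d n x) <= K * sigma ^ n.
Proof.
  intros Ix; rewrite Rabs_mult; apply Rmult_le_compat; try apply Rabs_pos;
    [apply b_bound, iter_maps | apply iter_deriv_bound]; auto.
Qed.

Lemma geometric_majorant : ex_series (fun n => K * sigma ^ n).
Proof.
  apply (ex_series_scal_l K (fun n => sigma ^ n)); eexists; apply is_series_geom.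
  rewrite Rabs_right; lra.
Qed.

Lemma orbit_series_abs_converges x : I x ->
  ex_series (fun n => Rabs (b (Nat.iter n t x) * iter_deriv t d n x)).
Proof.
  intros Ix; apply (@ex_series_le R_AbsRing R_CompleteNormedModule _
                     (fun n => K * sigma ^ n)); [|exact geometric_majorant].
  intro n; change norm with Rabs; rewrite Rabs_Rabsolu; apply orbit_series_term_bound; auto.
Qed.

Lemma orbit_series_bound x : I x -> Rabs (orbit_series t d b x) <= K / (1 - sigma).
Proof.
  intros Ix; eapply Rle_trans; [apply Series_Rabs, orbit_series_abs_converges; auto|].
  eapply Rle_trans; [apply (Series_le _ _ (fun n => conj (Rabs_pos _)
                              (orbit_series_term_bound x n Ix)) geometric_majorant)|].
  rewrite Series_scal_l, Series_geom by (rewrite Rabs_right; lra); right; field; lra.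
Qed.

Lemma orbit_series_equation x : I x ->
  orbit_series t d b x = orbit_series t d b (t x) * d x + b x.
Proof.
  intros Ix; unfold orbit_series.
  rewrite (Series_incr_1 _ (ex_series_Rabs _ (orbit_series_abs_converges x Ix))),
    <- Series_scal_r.
  rewrite (Series_ext _ (fun k => b (Nat.iter k t (t x)) * iter_deriv t d k (t x) * d x)).
  - simpl; ring.
  - intro k; rewrite iter_deriv_succ_r, <- Nat.iter_succ_r; simpl; ring.
Qed.

End ContractiveFunctionalEquation.

Lemma bounded_solutionE a h t d d1 p :
  bounded_solution a h t d d1 p <->
  (exists M, forall x, 0 <= x <= h -> Rabs (p x) <= M) /\
  (forall x, 0 <= x <= h -> p x = p (t x) * d x + (a * d1 x - d x)).
Proof.
  split; intros [Hb Hp]; split; [| |exact Hb|]; try exact Hb;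
    intros x Hx; rewrite (Hp x Hx); ring.
Qed.

Lemma bounded_solution_orbit_series a h sigma t d d1 M1 :
  (forall y, 0 <= y <= h -> 0 <= t y <= h) ->
  (forall y, 0 <= y <= h -> Rabs (d y) <= sigma) -> 0 <= sigma < 1 ->
  (forall y, 0 <= y <= h -> Rabs (d1 y) <= M1) ->
  let B := fun x => a * d1 x - d x in
  bounded_solution a h t d d1 (orbit_series t d B) /\
  (forall q, bounded_solution a h t d d1 q -> forall x, 0 <= x <= h ->
     is_series (fun n => B (Nat.iter n t x) * iter_deriv t d n x) (q x)).
Proof.
  intros Ht Hd Hsig Hd1 B.
  assert (HB : forall y, 0 <= y <= h -> Rabs (B y) <= Rabs a * M1 + sigma).
  { intros y Hy; unfold B; eapply Rle_trans; [apply Rabs_triang|].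
    rewrite Rabs_Ropp, Rabs_mult.
    apply Rplus_le_compat; [apply Rmult_le_compat_l; [apply Rabs_pos|]|]; auto. }
  split.
  - apply bounded_solutionE; split.
    + exists ((Rabs a * M1 + sigma) / (1 - sigma)); intros x Hx.
      exact (orbit_series_bound 0 h sigma t d B Ht Hd Hsig _ HB x Hx).
    + exact (orbit_series_equation 0 h sigma t d B Ht Hd Hsig _ HB).
  - intros q [Hqb Hq]%bounded_solutionE.
    exact (bounded_solution_is_series 0 h sigma t d B Ht Hd Hsig q Hqb Hq).
Qed.

Theorem proposition3
  (a ah sigma : R) (tau1 tau2 tau21 d1 d2 d21 : R -> R)
  (Ha : 0 < a < 1)
  (Hc1 : C1_on 0 a tau1 d1) (Hc2 : C1_on 0 a tau2 d2)
  (Hinc1 : strictly_increasing_on 0 a tau1)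
  (Hinc2 : strictly_increasing_on 0 a tau2)
  (Hrg1 : forall x, 0 <= x <= a -> 0 <= tau1 x <= 1)
  (Hrg2 : forall x, 0 <= x <= a -> 0 <= tau2 x <= 1)
  (H10 : tau1 0 = 0) (H1a : tau1 a = 1)
  (H20 : tau2 0 = 0) (H2a : tau2 a = 1)
  (Hle1 : forall x, 0 <= x <= a -> tau1 x <= x / a)
  (Hge2 : forall x, 0 <= x <= a -> tau2 x >= x / a)
  (H21rg : forall x, 0 <= x <= a -> 0 <= tau21 x <= a)
  (H21def : forall x, 0 <= x <= a -> tau2 (tau21 x) = tau1 x)
  (Hc21 : C1_on 0 a tau21 d21)
  (H21lt : forall x, 0 < x < a -> tau21 x < x)
  (Hah : 0 < ah < a) (Hsig : sigma < 1)
  (Hd21 : forall x, 0 <= x <= ah -> d21 x <= sigma) :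
  let B := fun x => a * d1 x - d21 x in
  (forall n : nat, exists Dn : R -> R,
      forall x, 0 <= x <= a -> deriv_within 0 a (Nat.iter n tau21) x (Dn x)) /\
  exists p : R -> R,
    bounded_solution a ah tau21 d21 d1 p /\
    (forall q : R -> R, bounded_solution a ah tau21 d21 d1 q ->
       forall x, 0 <= x <= ah -> q x = p x) /\
    (forall D : nat -> R -> R,
       (forall n x, 0 <= x <= a -> deriv_within 0 a (Nat.iter n tau21) x (D n x)) ->
       forall x, 0 <= x <= ah ->
         is_series (fun n => B (Nat.iter n tau21 x) * D n x) (p x)).
Proof.
  intros B.
  assert (Hinc21 := strictly_increasing_factor _ _ _ _ _ Hinc1 Hinc2 H21rg H21def).
  assert (H210 : tau21 0 = 0).
  { apply (strictly_increasing_inj 0 a tau2 (tau21 0) 0 Hinc2 (H21rg 0 ltac:(lra)) ltac:(lra)).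
    rewrite H21def, H10, H20 by lra; reflexivity. }
  assert (Hmaps : forall y, 0 <= y <= ah -> 0 <= tau21 y <= ah).
  { intros y Hy; destruct (Req_dec y 0) as [Hy0|Hy0]; [rewrite Hy0, H210; lra|].
    generalize (H21lt y ltac:(lra)) (H21rg y ltac:(lra)); lra. }
  assert (Hd21abs : forall y, 0 <= y <= ah -> Rabs (d21 y) <= sigma).
  { intros y Hy; rewrite Rabs_right; [apply Hd21; auto|apply Rle_ge].
    apply (deriv_within_increasing_nonneg 0 a ltac:(lra) tau21 y);
      [lra | exact Hinc21 | apply Hc21; lra]. }
  assert (Hsig0 : 0 <= sigma) by (generalize (Hd21abs 0 ltac:(lra)), (Rabs_pos (d21 0)); lra).
  destruct (continuous_on_interval_bounded 0 a d1 ltac:(lra) (proj2 Hc1)) as [M1 HM1].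
  destruct (bounded_solution_orbit_series a ah sigma tau21 d21 d1 M1 Hmaps Hd21abs
              ltac:(lra) (fun y Hy => HM1 y ltac:(lra))) as [Hsol Hseries].
  assert (Hderiv : forall n x, 0 <= x <= a ->
            deriv_within 0 a (Nat.iter n tau21) x (iter_deriv tau21 d21 n x)).
  { intros n x Hx; apply deriv_within_iter; auto; intros; apply Hc21; auto. }
  split; [intro n; exists (iter_deriv tau21 d21 n); apply Hderiv|].
  exists (orbit_series tau21 d21 B); split; [exact Hsol|split].
  - intros q Hq x Hx; symmetry; exact (is_series_unique _ _ (Hseries q Hq x Hx)).
  - intros D HD x Hx; apply (is_series_ext _ _ _ (fun n => f_equal _
      (deriv_within_unique 0 a ltac:(lra) _ x _ _ ltac:(lra) (Hderiv n x ltac:(lra))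
         (HD n x ltac:(lra))))).
    exact (Hseries _ Hsol x Hx).
Qed.
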